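(* Let $l\le m$ be integers. Then in $\wedge^{m-l+2}V_{\mathrm{aff}}$ one has $u_m\wedge u_{m-1}\wedge\cdots\wedge u_{l+1}\wedge u_l\wedge u_m=0$ and $u_l\wedge u_m\wedge u_{m-1}\wedge\cdots\wedge u_{l+1}\wedge u_l=0$.
   Context: Let $N,L\ge 1$ be integers, $q$ an indeterminate and $\mathbb K=\mathbb Q(q^{1/(2N)})$. Let $\mathbb K^L$ have basis $\mathfrak e_1,\dots,\mathfrak e_L$, $\mathbb K^N$ have basis $\mathfrak v_1,\dots,\mathfrak v_N$, and $V_{\mathrm{aff}}=\mathbb K[z^{\pm1}]\otimes\mathbb K^L\otimes\mathbb K^N$, with basis $z^m\mathfrak e_a\mathfrak v_\epsilon$. Identify $V_{\mathrm{aff}}^{\otimes n}=(\mathbb K[z^{\pm1}]\otimes\mathbb K^L)^{\otimes n}\otimes(\mathbb K^N)^{\otimes n}$, and $(\mathbb K[z^{\pm1}]\otimes\mathbb K^L)^{\otimes n}=\mathbb K[z_1^{\pm1},\dots,z_n^{\pm1}]\otimes(\mathbb K^L)^{\otimes n}$ via $z^{m_1}\mathfrak e_{a_1}\otimes\cdots\otimes z^{m_n}\mathfrak e_{a_n}\mapsto z_1^{m_1}\cdots z_n^{m_n}\otimes\mathfrak e_{a_1}\otimes\cdots\otimes\mathfrak e_{a_n}$. With $E_{a,b}$ the matrix units of $\mathbb K^L$ put $R(z_1,z_2)=(q^2z_1-z_2)\sum_{a}E_{a,a}\otimes E_{a,a}+q(z_1-z_2)\sum_{a\neq b}E_{a,a}\otimes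 E_{b,b}+z_1(q^2-1)\sum_{a<b}E_{a,b}\otimes E_{b,a}+z_2(q^2-1)\sum_{a>b}E_{a,b}\otimes E_{b,a}$, let $s$ be the operator exchanging the two tensor factors of $(\mathbb K[z^{\pm1}]\otimes\mathbb K^L)^{\otimes 2}$, and $\overset{c}{T}=\frac{z_1-q^2z_2}{z_1-z_2}\bigl(1-s\cdot\frac{R(z_1,z_2)}{q^2z_1-z_2}\bigr)-1$ (a well-defined operator on $\mathbb K[z_1^{\pm1},z_2^{\pm1}]\otimes(\mathbb K^L)^{\otimes2}$). Let $\overset{s}{T}$ on $(\mathbb K^N)^{\otimes 2}$ send $\mathfrak v_{\epsilon_1}\otimes\mathfrak v_{\epsilon_2}$ to $q^2\mathfrak v_{\epsilon_1}\otimes\mathfrak v_{\epsilon_2}$ if $\epsilon_1=\epsilon_2$, to $q\,\mathfrak v_{\epsilon_2}\otimes\mathfrak v_{\epsilon_1}$ if $\epsilon_1<\epsilon_2$, and to $q\,\mathfrak v_{\epsilon_2}\otimes\mathfrak v_{\epsilon_1}+(q^2-1)\mathfrak v_{\epsilon_1}\otimes\mathfrak v_{\epsilon_2}$ if $\epsilon_1>\epsilon_2$. For $1\le i<n$ let $\overset{c}{T}_i$ (resp. $\overset{s}{T}_i$) be $\overset{c}{T}$ (resp. $\overset{s}{T}$) acting in the $i$th and $(i+1)$st tensor factors of $(\mathbb K[z^{\pm1}]\otimes\mathbb K^L)^{\otimes n}$ (resp. $(\mathbb K^N)^{\otimes n}$), extended to $V_{\mathrm{aff}}^{\otimes n}$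 by the identity on the other factor. The ($q$-)wedge product is $\wedge^nV_{\mathrm{aff}}=V_{\mathrm{aff}}^{\otimes n}/\sum_{i=1}^{n-1}\mathrm{Im}(\overset{c}{T}_i-\overset{s}{T}_i)$, with quotient map denoted $\wedge$. Every $k\in\mathbb Z$ is written uniquely as $k=\bar k-N(\dot k+L\underline k)$ with $\bar k\in\{1,\dots,N\}$, $\dot k\in\{1,\dots,L\}$, $\underline k\in\mathbb Z$; put $u_k=z^{\underline k}\mathfrak e_{\dot k}\mathfrak v_{\bar k}$, so $\{u_k\}_{k\in\mathbb Z}$ is a basis of $V_{\mathrm{aff}}$. The wedge $u_{k_1}\wedge\cdots\wedge u_{k_n}$ is the image of $u_{k_1}\otimes\cdots\otimes u_{k_n}$; it is called normally ordered if $k_1>k_2>\cdots>k_n$. *)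

From HB Require Import structures.
From mathcomp Require Import all_boot all_order all_algebra.
Set Implicit Arguments. Unset Strict Implicit. Unset Printing Implicit Defensive.
Import Order.TTheory GRing.Theory Num.Theory.
Local Open Scope ring_scope.

(* The field K = Q(q^{1/(2N)}): rational functions in t := q^{1/(2N)}. *)
Definition Kf : fieldType := {fraction {poly rat}}.
Definition tK : Kf := tofrac ('X : {poly rat}).
Definition qK (N : nat) : Kf := tK ^+ (2 * N).

Section Tensor.
Variables (N L n : nat).
Local Notation q := (qK N).

(* Basis index of V_aff^{\otimes n}: for each tensor position j an exponent
   m_j of z, a colour a_j of K^L (0-based: ordinal a stands for e_{a+1}) and a
   spin eps_j of K^N (0-based).  An element of V_aff^{\otimes n} is a finitely
   supported coefficient function Idx -> K. *)
Definition Idx := {ffun 'I_n -> (int * 'I_L) * 'I_N}.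
Definition Vt := Idx -> Kf.

Definition finsupp (f : Vt) : Prop :=
  exists s : seq Idx, forall y, y \notin s -> f y = 0.

Definition zexp (y : Idx) (p : nat) : int :=
  if insub p is Some j then (y j).1.1 else 0.
Definition eidx (y : Idx) (p : nat) : nat :=
  if insub p is Some j then ((y j).1.2 : nat) else 0%N.
Definition vidx (y : Idx) (p : nat) : nat :=
  if insub p is Some j then ((y j).2 : nat) else 0%N.

Definition shiftz (p : nat) (d : int) (y : Idx) : Idx :=
  [ffun j : 'I_n => if (j : nat) == p then (((y j).1.1 + d, (y j).1.2), (y j).2)
             else y j].
Definition swapze (p p' : nat) (y : Idx) : Idx :=
  [ffun j : 'I_n => if insub p is Some jp then if insub p' is Some jp' then
      if (j : nat) == p then ((y jp').1, (y j).2)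
      else if (j : nat) == p' then ((y jp).1, (y j).2) else y j
    else y j else y j].
Definition swape (p p' : nat) (y : Idx) : Idx :=
  [ffun j : 'I_n => if insub p is Some jp then if insub p' is Some jp' then
      if (j : nat) == p then (((y j).1.1, (y jp').1.2), (y j).2)
      else if (j : nat) == p' then (((y j).1.1, (y jp).1.2), (y j).2) else y j
    else y j else y j].
Definition swapv (p p' : nat) (y : Idx) : Idx :=
  [ffun j : 'I_n => if insub p is Some jp then if insub p' is Some jp' then
      if (j : nat) == p then ((y j).1, (y jp').2)
      else if (j : nat) == p' then ((y j).1, (y jp).2) else y j
    else y j else y j].

(* multiplication by z_p (coefficient of z^m comes from z^{m-1}) *)
Definition mulz (p : nat) (f : Vt) : Vt := fun y => f (shiftz p (-1) y).
Definition sflip (p : nat) (f : Vt) : Vt := fun y => f (swapze p p.+1 y).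
Definition Rop (p : nat) (f : Vt) : Vt := fun y =>
  let a := eidx y p in let b := eidx y p.+1 in
  if a == b then q ^+ 2 * mulz p f y - mulz p.+1 f y
  else q * (mulz p f y - mulz p.+1 f y)
       + (q ^+ 2 - 1) * (if (a < b)%N then mulz p f (swape p p.+1 y)
                         else mulz p.+1 f (swape p p.+1 y)).
Definition sTop (p : nat) (f : Vt) : Vt := fun y =>
  let e1 := vidx y p in let e2 := vidx y p.+1 in
  if e1 == e2 then q ^+ 2 * f y
  else q * f (swapv p p.+1 y) + (if (e2 < e1)%N then (q ^+ 2 - 1) * f y else 0).

(* g = \overset{c}{T}_p w, characterised by clearing the denominators of
     cT = (z1 - q^2 z2)/(z1 - z2) (1 - s R(z1,z2)/(q^2 z1 - z2)) - 1,
   using s (X/(q^2 z1 - z2)) = s(X)/(q^2 z2 - z1):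
     (z1 - z2)(q^2 z2 - z1)(g + w) = (z1 - q^2 z2)((q^2 z2 - z1) w - s(R w)).
   Since multiplication by a nonzero Laurent polynomial is injective on
   finitely supported g, this determines g uniquely. *)
Definition cT_rel (p : nat) (w g : Vt) : Prop :=
  let D1 := fun f : Vt => fun y => mulz p f y - mulz p.+1 f y in
  let D2 := fun f : Vt => fun y => q ^+ 2 * mulz p.+1 f y - mulz p f y in
  let D3 := fun f : Vt => fun y => mulz p f y - q ^+ 2 * mulz p.+1 f y in
  D1 (D2 (fun y => g y + w y)) = D3 (fun y => D2 w y - sflip p (Rop p w) y).

(* x lies in \sum_{i=1}^{n-1} Im(cT_i - sT_i)  (0-based positions p, p+1) *)
Definition in_relations (x : Vt) : Prop :=
  exists (w g : nat -> Vt),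
    (forall p, (p.+1 < n)%N -> [/\ finsupp (w p), finsupp (g p) & cT_rel p (w p) (g p)])
    /\ x = fun y => \sum_(p < n.-1) (g p y - sTop p (w p) y).

End Tensor.

(* k = kbar - N (kdot + L kunder), kbar in 1..N, kdot in 1..L *)
Definition kbar (N : nat) (k : int) : int := ((k - 1) %% N%:Z)%Z + 1.
Definition kdot (N L : nat) (k : int) : int :=
  ((- ((k - 1) %/ N%:Z)%Z - 1) %% L%:Z)%Z + 1.
Definition kunder (N L : nat) (k : int) : int :=
  ((- ((k - 1) %/ N%:Z)%Z - 1) %/ L%:Z)%Z.

Definition utensor (N L : nat) (ks : seq int) : @Vt N L (size ks) := fun y =>
  if [forall j : 'I_(size ks),
        [&& (y j).1.1 == kunder N L (nth 0 ks j),
            ((y j).1.2 : nat)%:Z + 1 == kdot N L (nth 0 ks j) &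
            ((y j).2 : nat)%:Z + 1 == kbar N (nth 0 ks j)]]
  then 1 else 0.

Definition wedge_zero (N L : nat) (ks : seq int) : Prop :=
  @in_relations N L (size ks) (@utensor N L ks).

Definition downfrom (m l : int) : seq int :=
  [seq m - (j%:Z) | j <- iota 0 (`|m - l|%N).+1].

From mathcomp Require Import all_boot all_order all_algebra.
From mathcomp Require Import zify ring lra.
From Stdlib Require Import FunctionalExtensionality.
Set Implicit Arguments. Unset Strict Implicit. Unset Printing Implicit Defensive.
Import Order.TTheory GRing.Theory Num.Theory.
Local Open Scope ring_scope.

(* Modulo the relations in positions p, p+1, the tensor u_l (x) u_m with l < m
   straightens into a combination of the u_t (x) u_(l+m-t) with l < t <= m, and
   u_k (x) u_k vanishes.  For 0 < m - l < N L the straightening is a single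
   relation cT_p - sT_p applied to one basis tensor; a larger gap is reduced by
   writing u_l (x) u_m through (z_p + z_(p+1)) (u_(l+NL) (x) u_m), since
   multiplication by the symmetric polynomial z_p + z_(p+1) preserves the
   relations.
   In u_m /\ u_(m-1) /\ ... /\ u_l /\ u_m, straightening the last pair gives
   terms in which u_t, l < t <= m, follows u_m /\ ... /\ u_(l+1); each contains
   the shorter block u_t /\ ... /\ u_(l+1) /\ u_t, and induction on the length
   of the block ends with u_k /\ u_k = 0.  The second wedge is treated in the
   same way, straightening its first pair. *)

Lemma qK_neq0 N : qK N != 0.
Proof. by rewrite /qK /tK expf_neq0 // tofrac_eq0 polyX_eq0. Qed.

Lemma onerD_qK2_neq0 N : (0 < N)%N -> 1 + qK N ^+ 2 != 0.
Proof.
move=> N_gt0; rewrite /qK /tK -exprM -tofracXn -tofrac1 -tofracD tofrac_eq0.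
apply/eqP => /(congr1 (fun P : {poly rat} => P`_0)).
rewrite coefD coef1 coefXn coef0 /= eq_sym !muln_eq0 (gtn_eqF N_gt0) addr0.
by move/eqP; rewrite oner_eq0.
Qed.

Section Labels.
Variables (N L : nat) (N_gt0 : (0 < N)%N) (L_gt0 : (0 < L)%N).

(* A label (level, colour, spin) is the basis vector z^level e_(colour+1) v_(spin+1). *)
Definition label := ((int * 'I_L) * 'I_N)%type.

Definition kbar0 (k : int) : int := ((k - 1) %% N%:Z)%Z.
Definition kdot0 (k : int) : int := ((- ((k - 1) %/ N%:Z)%Z - 1) %% L%:Z)%Z.

Lemma kbar0_ge0 k : 0 <= kbar0 k.
Proof. by rewrite /kbar0 modz_ge0 // eqz_nat -lt0n. Qed.
Lemma kdot0_ge0 k : 0 <= kdot0 k.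
Proof. by rewrite /kdot0 modz_ge0 // eqz_nat -lt0n. Qed.
Lemma kbar0_lt k : (`|kbar0 k| < N)%N.
Proof. by rewrite -ltz_nat gez0_abs ?kbar0_ge0 // ltz_pmod. Qed.
Lemma kdot0_lt k : (`|kdot0 k| < L)%N.
Proof. by rewrite -ltz_nat gez0_abs ?kdot0_ge0 // ltz_pmod. Qed.

Definition label_of (k : int) : label :=
  ((kunder N L k, Ordinal (kdot0_lt k)), Ordinal (kbar0_lt k)).
Definition index_of (x : label) : int :=
  (x.2 : nat)%:Z + 1 - N%:Z * ((x.1.2 : nat)%:Z + 1 + L%:Z * x.1.1).

Lemma label_ofK : cancel label_of index_of.
Proof.
move=> k; rewrite /index_of /= !gez0_abs ?kbar0_ge0 ?kdot0_ge0 // /kbar0 /kdot0 /kunder.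
set Q := ((k - 1) %/ N%:Z)%Z.
have Ek := divz_eq (k - 1) N%:Z; have EQ := divz_eq (- Q - 1) L%:Z.
rewrite -/Q in Ek.
set R := ((- Q - 1) %/ L%:Z)%Z in EQ *; set C := ((- Q - 1) %% L%:Z)%Z in EQ *.
have -> : C + 1 + L%:Z * R = - Q by rewrite [L%:Z * R]mulrC; lra.
rewrite mulrN; lra.
Qed.

Lemma index_ofK : cancel index_of label_of.
Proof.
case=> [[u c] e]; have NZ : N%:Z != 0 by rewrite eqz_nat -lt0n.
have LZ : L%:Z != 0 by rewrite eqz_nat -lt0n.
have /andP[e_ge0 e_lt] : 0 <= (e : nat)%:Z < N%:Z by have := ltn_ord e; lia.
have /andP[c_ge0 c_lt] : 0 <= (c : nat)%:Z < L%:Z by have := ltn_ord c; lia.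
have Ek : (index_of ((u, c), e) - 1 = - ((c : nat)%:Z + 1 + L%:Z * u) * N%:Z + (e : nat)%:Z)%R.
  by rewrite /index_of /=; ring.
have EQ : (- ((index_of ((u, c), e) - 1) %/ N%:Z)%Z - 1 = u * L%:Z + (c : nat)%:Z)%R.
  by rewrite Ek divzMDl // divz_small ?addr0 ?gez0_abs //; ring.
rewrite /label_of /kunder EQ divzMDl // divz_small ?addr0 ?gez0_abs //.
congr (_, _); [congr (_, _)|]; apply: val_inj => /=.
  by rewrite /kdot0 EQ modzMDl modz_small.
by rewrite /kbar0 Ek modzMDl modz_small.
Qed.

Definition NL : int := N%:Z * L%:Z.

Lemma NL_gt0 : 0 < NL.
Proof. by rewrite /NL mulr_gt0 // ltz_nat. Qed.

Definition raise (i : int) (x : label) : label := ((x.1.1 + i, x.1.2), x.2).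

Lemma index_of_raise i x : index_of (raise i x) = index_of x - NL * i.
Proof. by rewrite /index_of /raise /NL /=; ring. Qed.

Lemma label_of_subNL k : label_of (k - NL) = raise 1 (label_of k).
Proof. by rewrite -[RHS]index_ofK index_of_raise label_ofK mulr1. Qed.

Lemma index_ofE (u : int) (c : 'I_L) (e : 'I_N) :
  index_of ((u, c), e) = (e : nat)%:Z + 1 - N%:Z * ((c : nat)%:Z + 1) - NL * u.
Proof. by rewrite /index_of /NL /=; ring. Qed.

Lemma Nz_gt0 : 0 < N%:Z. Proof. by rewrite ltz_nat. Qed.

(* colours scaled by N: the facts lia needs about the nonlinear monomials N * c *)
Lemma colour_scaled (c : 'I_L) : 0 <= N%:Z * (c : nat)%:Z /\ N%:Z * (c : nat)%:Z + N%:Z <= NL.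
Proof.
split; first by rewrite mulr_ge0 // ltW // Nz_gt0.
rewrite /NL -[X in _ + X]mulr1 -mulrDr; apply: ler_wpM2l; first exact: ltW Nz_gt0.
by have := ltn_ord c; lia.
Qed.

Lemma colour_lt_scaled (c d : 'I_L) :
  (c < d)%N -> N%:Z * (c : nat)%:Z + N%:Z <= N%:Z * (d : nat)%:Z.
Proof.
move=> lt_cd; rewrite -[X in _ + X]mulr1 -mulrDr; apply: ler_wpM2l; first exact: ltW Nz_gt0.
by lia.
Qed.

Lemma index_of_level_bounds (x : label) :
  - (NL * x.1.1) - NL < index_of x <= - (NL * x.1.1).
Proof.
case: x => [[u c] e]; rewrite index_ofE /=.
by have [c0 cL] := colour_scaled c; have := ltn_ord e; lia.
Qed.

Lemma level_of_small_gap (x y : label) : index_of x < index_of y < index_of x + NL ->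
  x.1.1 = y.1.1 \/ x.1.1 = y.1.1 + 1%:Z.
Proof.
move=> /andP[lt_xy lt_NL]; have NL_pos := NL_gt0.
have /andP[x_lo x_hi] := index_of_level_bounds x; have /andP[y_lo y_hi] := index_of_level_bounds y.
have : y.1.1 < x.1.1 + 1 by rewrite -(ltr_pM2l NL_pos) mulrDr mulr1; lia.
have : x.1.1 < y.1.1 + 2%:Z by rewrite -(ltr_pM2l NL_pos) mulrDr; lia.
by lia.
Qed.

End Labels.

Section Tensors.
Variables N L n : nat.
Local Notation Idx := (Idx N L n).
Local Notation Vt := (Vt N L n).

Lemma shiftzD r a b (y : Idx) : shiftz r a (shiftz r b y) = shiftz r (b + a) y.
Proof. by apply/ffunP => j; rewrite !ffunE; case: eqP => //= _; rewrite addrA. Qed.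

Lemma shiftzC r s a b (y : Idx) : shiftz r a (shiftz s b y) = shiftz s b (shiftz r a y).
Proof.
apply/ffunP => j; rewrite !ffunE.
by case: eqP => Hr; case: eqP => Hs //=; rewrite addrAC.
Qed.

Lemma shiftz0 r (y : Idx) : shiftz r 0 y = y.
Proof.
apply/ffunP => j; rewrite !ffunE; case: eqP => //= _.
by rewrite addr0; case: (y j) => [[]].
Qed.

Lemma finsupp0 : finsupp (fun _ : Idx => 0).
Proof. by exists [::]. Qed.

Lemma finsupp_map2 (h : Kf -> Kf -> Kf) (f1 f2 : Vt) : h 0 0 = 0 ->
  finsupp f1 -> finsupp f2 -> finsupp (fun y => h (f1 y) (f2 y)).
Proof.
move=> h00 [s1 H1] [s2 H2]; exists (s1 ++ s2) => y.
by rewrite mem_cat negb_or => /andP[/H1 -> /H2 ->].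
Qed.

Lemma finsupp_add (f1 f2 : Vt) : finsupp f1 -> finsupp f2 -> finsupp (fun y => f1 y + f2 y).
Proof. by apply: (@finsupp_map2 +%R); rewrite addr0. Qed.

Lemma finsupp_lin (f1 f2 : Vt) c :
  finsupp f1 -> finsupp f2 -> finsupp (fun y => f1 y + c * f2 y).
Proof. by apply: (@finsupp_map2 (fun a b => a + c * b)); rewrite mulr0 addr0. Qed.

Lemma finsupp_mulz r (f : Vt) : finsupp f -> finsupp (mulz r f).
Proof.
move=> [s H]; exists (map (shiftz r 1) s) => y Hy; apply: H.
apply: contra Hy => Hs; rewrite -[y](shiftz0 r) -(addNr 1) -shiftzD.
exact: map_f.
Qed.

Lemma insub_ord r (r_lt : (r < n)%N) : insub r = Some (Ordinal r_lt).
Proof. by rewrite insubT. Qed.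

(* [ebasis b] is the basis tensor whose j-th factor has label [b j]; the values
   of [b] beyond n - 1 are irrelevant. *)
Definition idx_of (b : nat -> label N L) : Idx := [ffun j : 'I_n => b (j : nat)].
Definition ebasis (b : nat -> label N L) : Vt := fun y => if y == idx_of b then 1 else 0.

Lemma ebasis_can (f g : Idx -> Idx) b b' y : cancel f g -> cancel g f ->
  g (idx_of b) = idx_of b' -> ebasis b (f y) = ebasis b' y.
Proof.
by move=> fK gK gb; rewrite /ebasis -[in f y == _](gK (idx_of b)) (can_eq fK) gb.
Qed.

Section Adjacent.
Variable p : nat.
Let p_neqS : (p == p.+1) = false := ltn_eqF (ltnSn p).
Let pS_neq : (p.+1 == p) = false := gtn_eqF (ltnSn p).

Definition shift2 (i j : nat) (y : Idx) : Idx :=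
  shiftz p (- i%:Z) (shiftz p.+1 (- j%:Z) y).
Definition unshift2 (i j : nat) (y : Idx) : Idx :=
  shiftz p i%:Z (shiftz p.+1 j%:Z y).

Lemma shift2K i j : cancel (shift2 i j) (unshift2 i j).
Proof.
move=> y; rewrite /unshift2 /shift2 [shiftz p.+1 _ (shiftz p _ _)]shiftzC.
by rewrite !shiftzD !addNr !shiftz0.
Qed.

Lemma unshift2K i j : cancel (unshift2 i j) (shift2 i j).
Proof.
move=> y; rewrite /unshift2 /shift2 [shiftz p.+1 _ (shiftz p _ _)]shiftzC.
by rewrite !shiftzD !addrN !shiftz0.
Qed.

Lemma shift200 y : shift2 0 0 y = y.
Proof. by rewrite /shift2 !oppr0 !shiftz0. Qed.

Lemma shiftz_shift2 i j y : shiftz p (-1) (shift2 i j y) = shift2 i.+1 j y.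
Proof. by rewrite /shift2 shiftzD; congr shiftz; lia. Qed.

Lemma shiftzS_shift2 i j y : shiftz p.+1 (-1) (shift2 i j y) = shift2 i j.+1 y.
Proof. by rewrite /shift2 shiftzC shiftzD; congr shiftz; congr shiftz; lia. Qed.

Lemma eidx_shift2 i j y r : eidx (shift2 i j y) r = eidx y r.
Proof. by rewrite /eidx; case: insubP => // u _ _; rewrite !ffunE; do 2 case: eqP. Qed.

Lemma vidx_shift2 i j y r : vidx (shift2 i j y) r = vidx y r.
Proof. by rewrite /vidx; case: insubP => // u _ _; rewrite !ffunE; do 2 case: eqP. Qed.

Definition raise2 (i j : nat) (b : nat -> label N L) : nat -> label N L :=
  fun r => if r == p then raise i%:Z (b r) else if r == p.+1 then raise j%:Z (b r) else b r.
Definition swap_ze (b : nat -> label N L) : nat -> label N L :=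
  fun r => if r == p then ((b p.+1).1, (b p).2)
           else if r == p.+1 then ((b p).1, (b p.+1).2) else b r.
Definition swap_e (b : nat -> label N L) : nat -> label N L :=
  fun r => if r == p then (((b p).1.1, (b p.+1).1.2), (b p).2)
           else if r == p.+1 then (((b p.+1).1.1, (b p).1.2), (b p.+1).2) else b r.
Definition swap_v (b : nat -> label N L) : nat -> label N L :=
  fun r => if r == p then ((b p).1, (b p.+1).2)
           else if r == p.+1 then ((b p.+1).1, (b p).2) else b r.

Ltac label_tac :=
  let r := fresh "r" in let E1 := fresh "E" in let E2 := fresh "E" in
  apply: functional_extensionality => r;
  rewrite /raise2 /swap_ze /swap_e /swap_v /=;
  case: (eqVneq r p) => [E1|E1]; last case: (eqVneq r p.+1) => [E2|E2];
  rewrite ?E1 ?E2 ?eqxx ?p_neqS ?pS_neq //=.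

Lemma swap_e_raise2 i j b : swap_e (raise2 i j b) = raise2 i j (swap_e b).
Proof. by label_tac. Qed.

Lemma swap_ze_raise2 i j b : swap_ze (raise2 i j b) = raise2 j i (swap_ze b).
Proof. by label_tac. Qed.

Lemma raise2D i j i' j' b : raise2 i j (raise2 i' j' b) = raise2 (i' + i) (j' + j) b.
Proof. by label_tac; rewrite /raise /= PoszD addrA. Qed.

Lemma raise2_colour i j b r : (raise2 i j b r).1.2 = (b r).1.2.
Proof. by rewrite /raise2; case: ifP => _; last case: ifP. Qed.

Lemma swap_eK : involutive swap_e.
Proof. by move=> b; label_tac; case: (b _) => [[]]. Qed.

Lemma swap_e_id b : (b p).1.2 = (b p.+1).1.2 -> swap_e b = b.
Proof. by move=> E; label_tac; [rewrite -E | rewrite E]; case: (b _) => [[]]. Qed.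

Lemma swap_ze_level b : (b p).1.1 = (b p.+1).1.1 -> swap_ze b = swap_e b.
Proof.
move=> E; label_tac; move: E;
  by case: (b p) => [[? ?] ?]; case: (b p.+1) => [[? ?] ?] /= ->.
Qed.

Lemma swap_ze_eK b : (b p).1.1 = (b p.+1).1.1 -> swap_ze (swap_e b) = b.
Proof.
move=> E; label_tac; move: E;
  by case: (b p) => [[? ?] ?]; case: (b p.+1) => [[? ?] ?] /= ->.
Qed.

Hypothesis p1_lt : (p.+1 < n)%N.
Let p_lt : (p < n)%N := ltnW p1_lt.

Ltac ordcase j :=
  let E := fresh "E" in let E2 := fresh "E" in
  case: (eqVneq (j : nat) p) => E;
  [ have -> : j = Ordinal p_lt by apply: val_inj
  | case: (eqVneq (j : nat) p.+1) => E2;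
    [ have -> : j = Ordinal p1_lt by apply: val_inj |] ];
  rewrite /= ?eqxx ?p_neqS ?pS_neq ?E ?E2 //=.

Ltac swap_tac :=
  let r := fresh "r" in
  apply/ffunP => r; rewrite ?(insub_ord p_lt) ?(insub_ord p1_lt) !ffunE;
  by ordcase r; rewrite ?ffunE /= ?eqxx ?p_neqS ?pS_neq.

Lemma swapze_shift2 i j y :
  swapze p p.+1 (shift2 i j y) = shift2 j i (swapze p p.+1 y).
Proof. rewrite /swapze /shift2; swap_tac. Qed.

Lemma swape_shift2 i j y : swape p p.+1 (shift2 i j y) = shift2 i j (swape p p.+1 y).
Proof. rewrite /swape /shift2; swap_tac. Qed.

Lemma swapv_shift2 i j y : swapv p p.+1 (shift2 i j y) = shift2 i j (swapv p p.+1 y).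
Proof. rewrite /swapv /shift2; swap_tac. Qed.

Lemma eidx_swapze_l (y : Idx) : eidx (swapze p p.+1 y) p = eidx y p.+1.
Proof. by rewrite /eidx /swapze (insub_ord p_lt) (insub_ord p1_lt) !ffunE /= eqxx. Qed.

Lemma eidx_swapze_r (y : Idx) : eidx (swapze p p.+1 y) p.+1 = eidx y p.
Proof. by rewrite /eidx /swapze (insub_ord p_lt) (insub_ord p1_lt) !ffunE /= eqxx pS_neq. Qed.

Lemma swapzeK : involutive (@swapze N L n p p.+1).
Proof.
move=> y; apply/ffunP => r; rewrite /swapze (insub_ord p_lt) (insub_ord p1_lt) !ffunE.
by ordcase r; rewrite ?ffunE /= ?eqxx ?p_neqS ?pS_neq //; case: (y _).
Qed.

Lemma swapeK : involutive (@swape N L n p p.+1).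
Proof.
move=> y; apply/ffunP => r; rewrite /swape (insub_ord p_lt) (insub_ord p1_lt) !ffunE.
by ordcase r; rewrite ?ffunE /= ?eqxx ?p_neqS ?pS_neq //; case: (y _) => [[]].
Qed.

Lemma swapvK : involutive (@swapv N L n p p.+1).
Proof.
move=> y; apply/ffunP => r; rewrite /swapv (insub_ord p_lt) (insub_ord p1_lt) !ffunE.
by ordcase r; rewrite ?ffunE /= ?eqxx ?p_neqS ?pS_neq //; case: (y _).
Qed.

Ltac idx_tac :=
  let r := fresh "r" in
  apply/ffunP => r; rewrite /raise2 /swap_ze /swap_e /swap_v !ffunE;
  rewrite ?(insub_ord p_lt) ?(insub_ord p1_lt) /=;
  ordcase r; rewrite ?ffunE //= ?addrK ?addrNK.

Lemma ebasis_shift2 i j b y : ebasis b (shift2 i j y) = ebasis (raise2 i j b) y.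
Proof. by apply: ebasis_can (shift2K i j) (unshift2K i j) _; rewrite /unshift2; idx_tac. Qed.

Lemma ebasis_swapze b y : ebasis b (swapze p p.+1 y) = ebasis (swap_ze b) y.
Proof. by apply: ebasis_can swapzeK swapzeK _; rewrite /swapze; idx_tac. Qed.

Lemma ebasis_swape b y : ebasis b (swape p p.+1 y) = ebasis (swap_e b) y.
Proof. by apply: ebasis_can swapeK swapeK _; rewrite /swape; idx_tac. Qed.

Lemma ebasis_swapv b y : ebasis b (swapv p p.+1 y) = ebasis (swap_v b) y.
Proof. by apply: ebasis_can swapvK swapvK _; rewrite /swapv; idx_tac. Qed.

Lemma ebasis_supp b y : ebasis b y = 0 \/
  [/\ eidx y p = (b p).1.2, eidx y p.+1 = (b p.+1).1.2,
      vidx y p = (b p).2 & vidx y p.+1 = (b p.+1).2].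
Proof.
rewrite /ebasis; case: eqP => [->|]; last by left.
by right; rewrite /eidx /vidx (insub_ord p_lt) (insub_ord p1_lt) !ffunE.
Qed.
End Adjacent.
End Tensors.

Section CTRelation.
Variables (N L n p : nat).
Hypothesis p1_lt : (p.+1 < n)%N.
Local Notation Idx := (Idx N L n).
Local Notation Vt := (Vt N L n).
Local Notation q := (qK N).
Local Notation sh := (@shift2 N L n p).

Definition zdiff (f : Vt) : Vt := fun y => q ^+ 2 * mulz p.+1 f y - mulz p f y.
Definition cT_lhs (w g : Vt) : Vt := fun y =>
  mulz p (zdiff (fun y => g y + w y)) y - mulz p.+1 (zdiff (fun y => g y + w y)) y.
Definition cT_rhs (w : Vt) : Vt :=
  let x := fun y => zdiff w y - sflip p (Rop p w) y in
  fun y => mulz p x y - q ^+ 2 * mulz p.+1 x y.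
Definition cT_defect (w g : Vt) (y : Idx) : Kf := cT_lhs w g y - cT_rhs w y.

Lemma cT_relP (w g : Vt) : cT_rel p w g <-> forall y, cT_defect w g y = 0.
Proof.
split=> [E y|E]; first by rewrite /cT_defect [cT_lhs w g]E subrr.
by apply: functional_extensionality => y; apply/eqP; rewrite -subr_eq0 -/(cT_defect _ _ _) E.
Qed.

Lemma shiftz_sh (y : Idx) : shiftz p (-1) y = sh 1 0 y.
Proof. by rewrite -{1}(shift200 p y) shiftz_shift2. Qed.

Lemma shiftzS_sh (y : Idx) : shiftz p.+1 (-1) y = sh 0 1 y.
Proof. by rewrite -{1}(shift200 p y) shiftzS_shift2. Qed.

Lemma shift2_sh00 i j (y : Idx) : sh i j (sh 0 0 y) = sh i j y.
Proof. by rewrite shift200. Qed.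

(* Write every argument of the coefficient functions as [sh i j y] or
   [swapze p p.+1 (sh i j y)], and the colours at [y]; what is left is ring algebra. *)
Ltac normalize_shifts y :=
  rewrite /cT_defect /cT_lhs /cT_rhs /zdiff /sflip /Rop /mulz /= -(shift200 p y);
  do ![ rewrite shiftz_shift2 | rewrite shiftzS_shift2 | rewrite (swapze_shift2 p1_lt)
      | rewrite (swape_shift2 p1_lt) | rewrite eidx_shift2 | rewrite (eidx_swapze_l p1_lt)
      | rewrite (eidx_swapze_r p1_lt) | rewrite shift2_sh00 ].

Lemma cT_defect_lin (w1 g1 w2 g2 : Vt) c y :
  cT_defect (fun y => w1 y + c * w2 y) (fun y => g1 y + c * g2 y) y =
  cT_defect w1 g1 y + c * cT_defect w2 g2 y.
Proof. by normalize_shifts y; case: ltngtP => _ /=; ring. Qed.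

Definition zsum (f : Vt) : Vt := fun y => mulz p f y + mulz p.+1 f y.

Lemma cT_defect_zsum (w g : Vt) y :
  cT_defect (zsum w) (zsum g) y =
  cT_defect w g (shiftz p (-1) y) + cT_defect w g (shiftz p.+1 (-1) y).
Proof. by rewrite /zsum; normalize_shifts y; case: ltngtP => _ /=; ring. Qed.

(* the Hecke relation  cT z_p = z_(p+1) cT - (q^2 - 1) z_(p+1) *)
Lemma cT_defect_mulz (w g : Vt) y :
  cT_defect (mulz p w) (fun y => mulz p.+1 g y - (q ^+ 2 - 1) * mulz p.+1 w y) y =
  cT_defect w g (shiftz p.+1 (-1) y).
Proof. by normalize_shifts y; case: ltngtP => _ /=; ring. Qed.

Lemma cT_rel0 : cT_rel p (fun _ : Idx => 0) (fun _ : Idx => 0).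
Proof.
have R0 : Rop p (fun _ : Idx => 0) = fun _ => 0.
  apply: functional_extensionality => y.
  by rewrite /Rop /mulz; case: ifP => _; rewrite ?if_same; ring.
by rewrite /cT_rel R0; apply: functional_extensionality => y; rewrite /sflip /mulz /=; ring.
Qed.

Lemma cT_rel_lin (w1 g1 w2 g2 : Vt) c : cT_rel p w1 g1 -> cT_rel p w2 g2 ->
  cT_rel p (fun y => w1 y + c * w2 y) (fun y => g1 y + c * g2 y).
Proof.
by move=> /cT_relP E1 /cT_relP E2; apply/cT_relP => y; rewrite cT_defect_lin E1 E2 mulr0 addr0.
Qed.

Lemma cT_rel_zsum (w g : Vt) : cT_rel p w g -> cT_rel p (zsum w) (zsum g).
Proof. by move=> /cT_relP E; apply/cT_relP => y; rewrite cT_defect_zsum !E addr0. Qed.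

Lemma cT_rel_mulz (w g : Vt) : cT_rel p w g ->
  cT_rel p (mulz p w) (fun y => mulz p.+1 g y - (q ^+ 2 - 1) * mulz p.+1 w y).
Proof. by move=> /cT_relP E; apply/cT_relP => y; rewrite cT_defect_mulz E. Qed.

Lemma sTop_lin (w1 w2 : Vt) c y :
  sTop p (fun y => w1 y + c * w2 y) y = sTop p w1 y + c * sTop p w2 y.
Proof. by rewrite /sTop /=; case: ifP => _; try case: ifP => _; ring. Qed.

Lemma sTop0 y : sTop p (fun _ : Idx => 0) y = 0.
Proof. by rewrite /sTop; case: ifP => _; try case: ifP => _; ring. Qed.

Lemma sTop_zsum (w : Vt) y : sTop p (zsum w) y = zsum (sTop p w) y.
Proof.
rewrite /sTop /zsum /mulz /= -(shift200 p y).
do ![ rewrite shiftz_shift2 | rewrite shiftzS_shift2 | rewrite (swapv_shift2 p1_lt)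
    | rewrite vidx_shift2 | rewrite shift2_sh00 ].
by case: ifP => _; try case: ifP => _; ring.
Qed.

End CTRelation.

Section BasisRelations.
Variables (N L n p : nat).
Hypothesis p1_lt : (p.+1 < n)%N.
Local Notation Idx := (Idx N L n).
Local Notation Vt := (Vt N L n).
Local Notation ebasis := (@ebasis N L n).
Local Notation q := (qK N).
Local Notation raise2 := (raise2 p).
Local Notation swap_e := (swap_e p).
Local Notation swap_v := (swap_v p).
Local Notation ebasis_sh := (ebasis_shift2 p1_lt).

Lemma mulz_ebasis b : mulz p (ebasis b) = ebasis (raise2 1 0 b).
Proof. by apply: functional_extensionality => y; rewrite /mulz (shiftz_sh p) ebasis_sh. Qed.

Lemma mulzS_ebasis b : mulz p.+1 (ebasis b) = ebasis (raise2 0 1 b).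
Proof. by apply: functional_extensionality => y; rewrite /mulz (shiftzS_sh p) ebasis_sh. Qed.

Lemma Rop_ebasis b : Rop p (ebasis b) = fun y =>
  if (b p).1.2 == (b p.+1).1.2 :> nat then
    q ^+ 2 * ebasis (raise2 1 0 b) y - ebasis (raise2 0 1 b) y
  else q * (ebasis (raise2 1 0 b) y - ebasis (raise2 0 1 b) y)
       + (q ^+ 2 - 1) * (if ((b p.+1).1.2 < (b p).1.2)%N
                         then ebasis (raise2 1 0 (swap_e b)) y
                         else ebasis (raise2 0 1 (swap_e b)) y).
Proof.
apply: functional_extensionality => y; rewrite /Rop /mulz /=.
rewrite !(shiftz_sh p) !(shiftzS_sh p) !ebasis_sh !(ebasis_swape p1_lt) !swap_e_raise2.
have := ebasis_supp p1_lt (raise2 1 0 b) y; have := ebasis_supp p1_lt (raise2 0 1 b) y.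
have := ebasis_supp p1_lt (raise2 1 0 (swap_e b)) y.
have := ebasis_supp p1_lt (raise2 0 1 (swap_e b)) y.
rewrite /raise2 /swap_e !eqxx (gtn_eqF (ltnSn p)) /=.
rewrite -/(raise2 1 0 b) -/(raise2 0 1 b) -/(swap_e b) -/(raise2 1 0 (swap_e b)).
rewrite -/(raise2 0 1 (swap_e b)).
move: (ebasis (raise2 1 0 b) y) (ebasis (raise2 0 1 b) y).
move: (ebasis (raise2 1 0 (swap_e b)) y) (ebasis (raise2 0 1 (swap_e b)) y).
move: (eidx y p) (eidx y p.+1) ((b p).1.2 : nat) ((b p.+1).1.2 : nat) => ey fy c d T1 T2 T3 T4.
by case=> [->|[? ? _ _]]; case=> [->|[? ? _ _]]; case=> [->|[? ? _ _]];
  case=> [->|[? ? _ _]]; subst; rewrite ?eqxx /=;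
  repeat (case: ifP => ?); try ring; exfalso; lia.
Qed.

Lemma sTop_ebasis b : sTop p (ebasis b) = fun y =>
  if (b p).2 == (b p.+1).2 :> nat then q ^+ 2 * ebasis b y
  else q * ebasis (swap_v b) y
       + (if ((b p.+1).2 < (b p).2)%N then (q ^+ 2 - 1) * ebasis b y else 0).
Proof.
apply: functional_extensionality => y; rewrite /sTop /= !(ebasis_swapv p1_lt).
have := ebasis_supp p1_lt b y; have := ebasis_supp p1_lt (swap_v b) y.
rewrite /swap_v !eqxx (gtn_eqF (ltnSn p)) /= -/(swap_v b).
move: (ebasis b y) (ebasis (swap_v b) y).
move: (vidx y p) (vidx y p.+1) ((b p).2 : nat) ((b p.+1).2 : nat) => ey fy c d T1 T2.
by case=> [->|[_ _ ? ?]]; case=> [->|[_ _ ? ?]]; subst; rewrite ?eqxx /=;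
  repeat (case: ifP => ?); try ring; exfalso; lia.
Qed.

Definition cT_ebasis (b : nat -> label N L) : Vt := fun y =>
  let c := (b p).1.2 : nat in let d := (b p.+1).1.2 : nat in
  if c == d then - ebasis b y
  else if (c < d)%N then (q ^+ 2 - 1) * ebasis b y - q * ebasis (swap_e b) y
  else - (q * ebasis (swap_e b) y).

Lemma cT_rel_ebasis b : (b p).1.1 = (b p.+1).1.1 -> cT_rel p (ebasis b) (cT_ebasis b).
Proof.
move=> Eb; have Eze := swap_ze_level Eb; have Eze' := swap_ze_eK Eb.
apply/cT_relP => y.
rewrite /cT_defect /cT_lhs /cT_rhs /zdiff /sflip Rop_ebasis /mulz /cT_ebasis /= -(shift200 p y).
do ![ rewrite shiftz_shift2 | rewrite shiftzS_shift2 | rewrite (swapze_shift2 p1_lt)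
    | rewrite (swape_shift2 p1_lt) | rewrite shift2_sh00 | rewrite ebasis_sh
    | rewrite (ebasis_swapze p1_lt) | rewrite raise2D | rewrite swap_ze_raise2 | rewrite Eze
    | rewrite Eze' | rewrite swap_e_raise2 | rewrite swap_eK ].
rewrite ?addSn ?add0n ?addn0.
by case: ltngtP => E /=; rewrite ?(swap_e_id (val_inj E)); ring.
Qed.

Lemma mulzS_cT_ebasis b : mulz p.+1 (cT_ebasis b) = cT_ebasis (raise2 0 1 b).
Proof.
apply: functional_extensionality => y.
by rewrite /cT_ebasis /mulz (shiftzS_sh p) !ebasis_sh swap_e_raise2 !raise2_colour.
Qed.

End BasisRelations.

Section Relations.
Variables (N L n : nat).
Local Notation Idx := (Idx N L n).
Local Notation Vt := (Vt N L n).
Local Notation ebasis := (@ebasis N L n).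
Local Notation q := (qK N).

Lemma in_relations_ext (x x' : Vt) : in_relations x -> x =1 x' -> in_relations x'.
Proof. by move=> + /functional_extensionality <-. Qed.

Lemma in_relations0 : in_relations (fun _ : Idx => 0).
Proof.
exists (fun _ _ => 0), (fun _ _ => 0); split.
  by move=> r _; split; [exact: finsupp0 | exact: finsupp0 | exact: cT_rel0].
by apply: functional_extensionality => y; rewrite big1 // => i _; rewrite sTop0 subrr.
Qed.

Lemma in_relations_lin (x1 x2 : Vt) c :
  in_relations x1 -> in_relations x2 -> in_relations (fun y => x1 y + c * x2 y).
Proof.
move=> [w1 [g1 [H1 ->]]] [w2 [g2 [H2 ->]]].
exists (fun r y => w1 r y + c * w2 r y), (fun r y => g1 r y + c * g2 r y); split.
  move=> r r_lt; have [F1 G1 C1] := H1 r r_lt; have [F2 G2 C2] := H2 r r_lt.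
  by split; [exact: finsupp_lin | exact: finsupp_lin | exact: cT_rel_lin].
apply: functional_extensionality => y; rewrite mulr_sumr -big_split /=.
by apply: eq_bigr => i _; rewrite sTop_lin; ring.
Qed.

Variable p : nat.
Hypothesis p1_lt : (p.+1 < n)%N.
Local Notation cT_ebasis := (@cT_ebasis N L n p).

Definition rel_at (x : Vt) : Prop := exists w g,
  [/\ finsupp w, finsupp g, cT_rel p w g & x = fun y => g y - sTop p w y].

Lemma rel_at_in_relations x : rel_at x -> in_relations x.
Proof.
move=> [w [g [Fw Fg C ->]]].
exists (fun r => if r == p then w else fun _ => 0), (fun r => if r == p then g else fun _ => 0).
split=> [r _|].
  by case: eqP => [->|_]; split=> //; [exact: finsupp0 | exact: finsupp0 | exact: cT_rel0].
apply: functional_extensionality => y.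
have p_lt : (p < n.-1)%N by case: (n) p1_lt.
rewrite (bigD1 (Ordinal p_lt)) //= eqxx big1 ?addr0 // => i /eqP Hi.
case: eqP => [Ei|_]; first by case: Hi; exact: val_inj.
by rewrite sTop0 subrr.
Qed.

Lemma rel_at_ext x x' : rel_at x -> x =1 x' -> rel_at x'.
Proof. by move=> + /functional_extensionality <-. Qed.

Lemma rel_at0 : rel_at (fun _ => 0).
Proof.
exists (fun _ => 0), (fun _ => 0).
split; [exact: finsupp0 | exact: finsupp0 | exact: cT_rel0 |].
by apply: functional_extensionality => y; rewrite sTop0 subrr.
Qed.

Lemma rel_at_lin x1 x2 c : rel_at x1 -> rel_at x2 -> rel_at (fun y => x1 y + c * x2 y).
Proof.
move=> [w1 [g1 [F1 G1 C1 ->]]] [w2 [g2 [F2 G2 C2 ->]]].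
exists (fun y => w1 y + c * w2 y), (fun y => g1 y + c * g2 y).
split; [exact: finsupp_lin | exact: finsupp_lin | exact: cT_rel_lin |].
by apply: functional_extensionality => y; rewrite sTop_lin; ring.
Qed.

Lemma rel_atZ x c : rel_at x -> rel_at (fun y => c * x y).
Proof. by move=> R; apply: rel_at_ext (rel_at_lin c rel_at0 R) _ => y; rewrite add0r. Qed.

Lemma rel_at_zsum x : rel_at x -> rel_at (zsum p x).
Proof.
move=> [w [g [F G C ->]]]; exists (zsum p w), (zsum p g).
split; [by apply: finsupp_add; apply: finsupp_mulz
       | by apply: finsupp_add; apply: finsupp_mulz | exact: cT_rel_zsum |].
by apply: functional_extensionality => y; rewrite (sTop_zsum p1_lt) /zsum /mulz; ring.
Qed.

Lemma finsupp_ebasis b : finsupp (ebasis b).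
Proof. by exists [:: idx_of n b] => y; rewrite inE /ebasis => /negbTE ->. Qed.

Lemma finsupp_cT_ebasis b : finsupp (cT_ebasis b).
Proof.
exists [:: idx_of n b; idx_of n (swap_e p b)] => y; rewrite !inE negb_or => /andP[H1 H2].
by rewrite /cT_ebasis /ebasis (negbTE H1) (negbTE H2); case: ifP => _; try case: ifP => _; ring.
Qed.

Lemma rel_at_ebasis b : (b p).1.1 = (b p.+1).1.1 ->
  rel_at (fun y => cT_ebasis b y - sTop p (ebasis b) y).
Proof.
move=> Eb; exists (ebasis b), (cT_ebasis b).
by split; [exact: finsupp_ebasis | exact: finsupp_cT_ebasis | exact: cT_rel_ebasis |].
Qed.

Lemma rel_at_ebasis_raise b : (b p).1.1 = (b p.+1).1.1 ->
  rel_at (fun y => cT_ebasis (raise2 p 0 1 b) y - (q ^+ 2 - 1) * ebasis (raise2 p 0 1 b) y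
                   - sTop p (ebasis (raise2 p 1 0 b)) y).
Proof.
move=> Eb; exists (mulz p (ebasis b)), (fun y =>
  mulz p.+1 (cT_ebasis b) y - (q ^+ 2 - 1) * mulz p.+1 (ebasis b) y).
split; [exact/finsupp_mulz/finsupp_ebasis | | exact/cT_rel_mulz/cT_rel_ebasis |].
  apply: (finsupp_map2 (h := fun a b => a - (q ^+ 2 - 1) * b)
           (f1 := mulz p.+1 (cT_ebasis b)) (f2 := mulz p.+1 (ebasis b))).
  - by rewrite mulr0 subr0.
  - exact/finsupp_mulz/finsupp_cT_ebasis.
  - exact/finsupp_mulz/finsupp_ebasis.
apply: functional_extensionality => y.
by rewrite (mulz_ebasis p1_lt) (mulzS_ebasis p1_lt) (mulzS_cT_ebasis p1_lt).
Qed.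

End Relations.

Section PureTensors.
Variables (N L n p : nat) (N_gt0 : (0 < N)%N) (L_gt0 : (0 < L)%N).
Hypothesis p1_lt : (p.+1 < n)%N.
Local Notation Vt := (Vt N L n).
Local Notation ebasis := (@ebasis N L n).
Local Notation label_of := (label_of N_gt0 L_gt0).
Local Notation index_of := (@index_of N L).
Local Notation NL := (NL N L).
Let p_neqS : (p == p.+1) = false := ltn_eqF (ltnSn p).
Let pS_neq : (p.+1 == p) = false := gtn_eqF (ltnSn p).

Definition utens (k : nat -> int) : Vt := ebasis (fun r => label_of (k r)).

Definition set2 (k : nat -> int) (a b : int) : nat -> int :=
  fun r => if r == p then a else if r == p.+1 then b else k r.
Definition set2_label (k : nat -> int) (X Y : label N L) : nat -> label N L :=
  fun r => if r == p then X else if r == p.+1 then Y else label_of (k r).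

Ltac pos_tac :=
  let r := fresh "r" in let E1 := fresh "E" in let E2 := fresh "E" in
  apply: functional_extensionality => r;
  rewrite /set2 /set2_label /raise2 /swap_e /swap_v /=;
  case: (eqVneq r p) => [E1|E1]; last case: (eqVneq r p.+1) => [E2|E2];
  rewrite ?E1 ?E2 ?eqxx ?p_neqS ?pS_neq //=.

Lemma utens_set2 k a b : utens (set2 k a b) = ebasis (set2_label k (label_of a) (label_of b)).
Proof. by congr ebasis; pos_tac. Qed.

Lemma set2_id k : set2 k (k p) (k p.+1) = k.
Proof. by pos_tac. Qed.

Lemma set2_set2 k a b a' b' : set2 (set2 k a b) a' b' = set2 k a' b'.
Proof. by pos_tac. Qed.

Lemma set2_p k a b : set2 k a b p = a.
Proof. by rewrite /set2 eqxx. Qed.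

Lemma set2_pS k a b : set2 k a b p.+1 = b.
Proof. by rewrite /set2 eqxx pS_neq. Qed.

Lemma raise2_set2_label i j k X Y :
  raise2 p i j (set2_label k X Y) = set2_label k (raise i%:Z X) (raise j%:Z Y).
Proof. by pos_tac. Qed.

Lemma swap_e_set2_label k X Y :
  swap_e p (set2_label k X Y) = set2_label k ((X.1.1, Y.1.2), X.2) ((Y.1.1, X.1.2), Y.2).
Proof. by pos_tac. Qed.

Lemma swap_v_set2_label k X Y :
  swap_v p (set2_label k X Y) = set2_label k (X.1, Y.2) (Y.1, X.2).
Proof. by pos_tac. Qed.

Lemma set2_label_p k X Y : set2_label k X Y p = X.
Proof. by rewrite /set2_label eqxx. Qed.

Lemma set2_label_pS k X Y : set2_label k X Y p.+1 = Y.
Proof. by rewrite /set2_label eqxx pS_neq. Qed.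

Lemma mulz_utens k a b : mulz p (utens (set2 k a b)) = utens (set2 k (a - NL) b).
Proof.
rewrite !utens_set2 (mulz_ebasis p1_lt) raise2_set2_label label_of_subNL.
congr (ebasis (set2_label _ _ _)); rewrite /raise.
by case: (label_of b) => [[? ?] ?] /=; rewrite addr0.
Qed.

Lemma mulzS_utens k a b : mulz p.+1 (utens (set2 k a b)) = utens (set2 k a (b - NL)).
Proof.
rewrite !utens_set2 (mulzS_ebasis p1_lt) raise2_set2_label label_of_subNL.
congr (ebasis (set2_label _ _ _)); rewrite /raise.
by case: (label_of a) => [[? ?] ?] /=; rewrite addr0.
Qed.

Lemma utens_zsum k a b : zsum p (utens (set2 k a b)) =1
  fun y => utens (set2 k (a - NL) b) y + utens (set2 k a (b - NL)) y.
Proof. by move=> y; rewrite /zsum mulz_utens mulzS_utens. Qed.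

End PureTensors.

Section Straightening.
Variables (N L n p : nat) (N_gt0 : (0 < N)%N) (L_gt0 : (0 < L)%N).
Hypothesis p1_lt : (p.+1 < n)%N.
Local Notation Vt := (Vt N L n).
Local Notation ebasis := (@ebasis N L n).
Local Notation label_of := (label_of N_gt0 L_gt0).
Local Notation index_of := (@index_of N L).
Local Notation NL := (NL N L).
Local Notation q := (qK N).
Local Notation utens := (@utens N L n N_gt0 L_gt0).
Local Notation set2 := (set2 p).
Local Notation set2_label := (@set2_label N L p N_gt0 L_gt0).
Local Notation rel_at := (@rel_at N L n p).

Definition span_inner (l m : int) (k : nat -> int) (x : Vt) : Prop :=
  exists s : seq (Kf * int), all (fun t => l < t.2 <= m) s /\
    x =1 fun y => \sum_(t <- s) t.1 * utens (set2 k t.2 (l + m - t.2)) y.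

Definition straightens (l m : int) (k : nat -> int) (x : Vt) : Prop :=
  exists z, span_inner l m k z /\ rel_at (fun y => x y - z y).

Lemma span_inner0 l m k : span_inner l m k (fun _ => 0).
Proof. by exists [::]; split => // y; rewrite big_nil. Qed.

Lemma span_inner_term l m k t : l < t <= m -> span_inner l m k (utens (set2 k t (l + m - t))).
Proof. by move=> lt_m; exists [:: (1, t)]; split => [|y]; rewrite /= ?lt_m // big_seq1 mul1r. Qed.

Lemma span_inner_lin l m k z1 z2 c :
  span_inner l m k z1 -> span_inner l m k z2 -> span_inner l m k (fun y => z1 y + c * z2 y).
Proof.
move=> [s1 [A1 E1]] [s2 [A2 E2]]; exists (s1 ++ map (fun t => (c * t.1, t.2)) s2).
split; first by rewrite all_cat A1 all_map.
move=> y; rewrite E1 E2 big_cat big_map /= mulr_sumr.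
by congr (_ + _); apply: eq_bigr => t _; rewrite mulrA.
Qed.

Lemma span_inner_widen l m l' m' k z : l <= l' -> m' <= m -> l' + m' = l + m ->
  span_inner l' m' k z -> span_inner l m k z.
Proof.
move=> le_l le_m Esum [s [A E]]; exists s; split; last by move=> y; rewrite E Esum.
by apply: sub_all A => t /andP[lt_t t_le]; rewrite (le_lt_trans le_l lt_t) (le_trans t_le le_m).
Qed.

Lemma span_inner_set2 l m k a b z : span_inner l m (set2 k a b) z -> span_inner l m k z.
Proof.
by move=> [s [A E]]; exists s; split => // y; rewrite E; under eq_bigr do rewrite set2_set2.
Qed.

Lemma span_inner_zsum l m k z : span_inner (l + NL) m k z -> span_inner l m k (zsum p z).
Proof.
have NL_pos := NL_gt0 N_gt0 L_gt0.
move=> [s [A E]]; exists (map (fun t => (t.1, t.2 - NL)) s ++ s); split.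
  rewrite all_cat all_map; apply/andP; split; apply: sub_all A => t /=; lia.
move=> y; rewrite /zsum /mulz !E big_cat big_map /= -!big_split /=.
apply: eq_bigr => t _; rewrite -!mulrDr; congr (_ * _).
have := utens_zsum N_gt0 L_gt0 p1_lt k t.2 (l + NL + m - t.2) y; rewrite /zsum /mulz => ->.
have -> : l + NL + m - t.2 = l + m - (t.2 - NL) by ring.
by have -> : l + m - (t.2 - NL) - NL = l + m - t.2 by ring.
Qed.

Lemma straightens_ext l m k x x' : straightens l m k x -> x =1 x' -> straightens l m k x'.
Proof. by move=> [z [G R]] E; exists z; split => //; apply: rel_at_ext R _ => y; rewrite E. Qed.

Lemma straightens_lin l m k x1 x2 c : straightens l m k x1 -> straightens l m k x2 ->
  straightens l m k (fun y => x1 y + c * x2 y).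
Proof.
move=> [z1 [G1 R1]] [z2 [G2 R2]]; exists (fun y => z1 y + c * z2 y).
by split; [exact: span_inner_lin | apply: rel_at_ext (rel_at_lin p1_lt c R1 R2) _ => y; ring].
Qed.

Lemma straightens_span l m k z : span_inner l m k z -> straightens l m k z.
Proof. by exists z; split => //; apply: rel_at_ext (rel_at0 _ _ _ _) _ => y; rewrite subrr. Qed.

Lemma straightens_rel l m k x : rel_at x -> straightens l m k x.
Proof.
move=> R; exists (fun _ => 0).
by split; [exact: span_inner0 | apply: rel_at_ext R _ => y; rewrite subr0].
Qed.

Lemma straightens_zsum l m k x : straightens (l + NL) m k x -> straightens l m k (zsum p x).
Proof.
move=> [z [G R]]; exists (zsum p z); split; first exact: span_inner_zsum.
by apply: rel_at_ext (rel_at_zsum p1_lt R) _ => y; rewrite /zsum /mulz; ring.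
Qed.

Lemma straightens_widen l m l' m' k x : l <= l' -> m' <= m -> l' + m' = l + m ->
  straightens l' m' k x -> straightens l m k x.
Proof. by move=> le_l le_m Esum [z [G R]]; exists z; split => //; exact: span_inner_widen G. Qed.

Lemma straightens_set2 l m k a b x : straightens l m (set2 k a b) x -> straightens l m k x.
Proof. by move=> [z [G R]]; exists z; split => //; exact: span_inner_set2 G. Qed.

Lemma ebasis_set2_label k X Y : ebasis (set2_label k X Y) =
  utens (set2 k (index_of X) (index_of X + index_of Y - index_of X)).
Proof. by rewrite utens_set2 addrC addKr !index_ofK. Qed.

Lemma straightens_from_rel l m k (x r : Vt) (c : Kf) (ts : seq (Kf * label N L * label N L)) :
  c != 0 -> rel_at r ->
  all (fun t => (l < index_of t.1.2 <= m) && (index_of t.1.2 + index_of t.2 == l + m)) ts ->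
  r =1 (fun y => \sum_(t <- ts) t.1.1 * ebasis (set2_label k t.1.2 t.2) y - c * x y) ->
  straightens l m k x.
Proof.
move=> c_neq0 R A Er.
exists (fun y => c^-1 * \sum_(t <- ts) t.1.1 * ebasis (set2_label k t.1.2 t.2) y); split.
  exists (map (fun t => (c^-1 * t.1.1, index_of t.1.2)) ts); split.
    by rewrite all_map; apply: sub_all A => t /andP[].
  move=> y; rewrite big_map mulr_sumr; apply: eq_big_seq => t /(allP A) /andP[_ /eqP <-] /=.
  by rewrite ebasis_set2_label mulrA.
apply: rel_at_ext (rel_atZ p1_lt (- c^-1) R) _ => y.
by rewrite Er mulrBr !mulNr mulrA mulVf // mul1r opprK addrC.
Qed.

Lemma rel_at_diag k : k p = k p.+1 -> rel_at (utens k).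
Proof.
move=> Ek; set b := fun r => label_of (k r).
have Eb : b p = b p.+1 by rewrite /b Ek.
have R := rel_at_ebasis p1_lt (congr1 (fun x : label N L => x.1.1) Eb).
apply: rel_at_ext (rel_atZ p1_lt (- (1 + q ^+ 2)^-1) R) _ => y.
rewrite (sTop_ebasis p1_lt) /cT_ebasis Eb !eqxx /= /utens -/b.
have q2_neq0 := onerD_qK2_neq0 N_gt0.
have -> : - ebasis b y - q ^+ 2 * ebasis b y = - ((1 + q ^+ 2) * ebasis b y) by ring.
by rewrite mulrN mulNr opprK mulrA mulVf // mul1r.
Qed.

(* Each case applies the relation cT_p - sT_p to the basis tensor obtained from
   u_l (x) u_m by exchanging the two spins (to z_p times such a tensor when the
   levels differ); sT_p maps it to c u_l (x) u_m plus terms listed in [ts]. *)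
Ltac straighten_with c ts R :=
  apply: (straightens_from_rel (c := c) (ts := ts) _ R);
  [ first [exact: qK_neq0 | exact: expf_neq0 (qK_neq0 N)]
  | by rewrite /= !andbT !index_ofE; lia
  | move=> y; rewrite /cT_ebasis (sTop_ebasis p1_lt) ?raise2_set2_label !swap_e_set2_label
      !swap_v_set2_label !set2_label_p !set2_label_pS /raise /= !big_cons big_nil /= ?addr0;
    by repeat (case: ifP => ?); try ring; exfalso; lia ].

Lemma straighten_same_level k (u : int) (cl cm : 'I_L) (el em : 'I_N) :
  index_of ((u, cl), el) < index_of ((u, cm), em) ->
  straightens (index_of ((u, cl), el)) (index_of ((u, cm), em)) k
    (ebasis (set2_label k ((u, cl), el) ((u, cm), em))).
Proof.
move=> lt_lm; have El := index_ofE u cl el; have Em := index_ofE u cm em.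
have R : rel_at (fun y => cT_ebasis p (set2_label k ((u, cl), em) ((u, cm), el)) y
                  - sTop p (ebasis (set2_label k ((u, cl), em) ((u, cm), el))) y).
  by apply: (rel_at_ebasis p1_lt); rewrite set2_label_p set2_label_pS.
have [cl0 clL] := colour_scaled N_gt0 L_gt0 cl; have [cm0 cmL] := colour_scaled N_gt0 L_gt0 cm.
have el_lt := ltn_ord el; have em_lt := ltn_ord em.
case: (ltngtP cl cm) => [lt_c | lt_c | /val_inj E_c].
- by have := colour_lt_scaled N_gt0 L_gt0 lt_c; lia.
- have gap := colour_lt_scaled N_gt0 L_gt0 lt_c.
  case: (ltngtP el em) => [lt_e | lt_e | /val_inj E_e].
  + straighten_with (qK N) [:: (- q, ((u, cm), em), ((u, cl), el));
                               (- (q ^+ 2 - 1), ((u, cl), em), ((u, cm), el))] R.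
  + straighten_with (qK N) [:: (- q, ((u, cm), em), ((u, cl), el))] R.
  + subst el; straighten_with (qK N ^+ 2) [:: (- q, ((u, cm), em), ((u, cl), em))] R.
- subst cl; straighten_with (qK N) [:: (- q ^+ 2, ((u, cm), em), ((u, cm), el))] R.
Qed.

Lemma straighten_next_level k (u : int) (cl cm : 'I_L) (el em : 'I_N) :
  index_of ((u + 1%:Z, cl), el) < index_of ((u, cm), em) < index_of ((u + 1%:Z, cl), el) + NL ->
  straightens (index_of ((u + 1%:Z, cl), el)) (index_of ((u, cm), em)) k
    (ebasis (set2_label k ((u + 1%:Z, cl), el) ((u, cm), em))).
Proof.
move=> /andP[lt_lm lt_NL]; have Em := index_ofE u cm em.
have El : index_of ((u + 1%:Z, cl), el) =
    (el : nat)%:Z + 1 - N%:Z * ((cl : nat)%:Z + 1) - NL * u - NL.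
  by rewrite index_ofE; ring.
have := @rel_at_ebasis_raise _ _ _ _ p1_lt (set2_label k ((u, cl), em) ((u, cm), el)).
rewrite set2_label_p set2_label_pS => /(_ erefl) R.
rewrite !raise2_set2_label /raise /= !addr0 in R.
have [cl0 clL] := colour_scaled N_gt0 L_gt0 cl; have [cm0 cmL] := colour_scaled N_gt0 L_gt0 cm.
have el_lt := ltn_ord el; have em_lt := ltn_ord em.
case: (ltngtP cl cm) => [lt_c | lt_c | /val_inj E_c].
- have gap := colour_lt_scaled N_gt0 L_gt0 lt_c.
  case: (ltngtP el em) => [lt_e | lt_e | /val_inj E_e].
  + straighten_with (qK N) [:: (- q, ((u, cm), em), ((u + 1%:Z, cl), el));
                               (- (q ^+ 2 - 1), ((u + 1%:Z, cl), em), ((u, cm), el))] R.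
  + straighten_with (qK N) [:: (- q, ((u, cm), em), ((u + 1%:Z, cl), el))] R.
  + subst el; straighten_with (qK N ^+ 2) [:: (- q, ((u, cm), em), ((u + 1%:Z, cl), em))] R.
- by have := colour_lt_scaled N_gt0 L_gt0 lt_c; lia.
- subst cl; straighten_with (qK N) [:: (- q ^+ 2, ((u, cm), em), ((u + 1%:Z, cm), el))] R.
Qed.

Lemma straighten_small (k : nat -> int) (l m : int) : k p = l -> k p.+1 = m -> l < m < l + NL ->
  straightens l m k (utens k).
Proof.
move=> kp kpS lt_lm.
have -> : utens k = ebasis (set2_label k (label_of l) (label_of m)).
  by rewrite -{1}(set2_id p k) utens_set2 kp kpS.
rewrite -{1}(label_ofK N_gt0 L_gt0 l) -{1}(label_ofK N_gt0 L_gt0 m).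
rewrite -(label_ofK N_gt0 L_gt0 l) -(label_ofK N_gt0 L_gt0 m) in lt_lm.
move: (label_of l) (label_of m) lt_lm => [[ul cl] el] [[um cm] em] lt_lm.
case: (level_of_small_gap N_gt0 L_gt0 lt_lm) => /= E_u; rewrite E_u in lt_lm *.
  by case/andP: lt_lm => lt_lm _; apply: straighten_same_level.
exact: straighten_next_level.
Qed.

Lemma straighten (k : nat -> int) (l m : int) : k p = l -> k p.+1 = m -> l < m ->
  straightens l m k (utens k).
Proof.
have NL_pos := NL_gt0 N_gt0 L_gt0.
have [d le_d] : exists d, (`|m - l| <= d)%N by exists `|m - l|%N.
elim: d k l m le_d => [|d IH] k l m le_d kp kpS lt_lm; first by lia.
case: (ltP (m - l) NL) => [gap_lt | gap_ge]; first by apply: straighten_small; lia.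
have split_k : (fun y => zsum p (utens (set2 k (l + NL) m)) y
                         + (-1) * utens (set2 k (l + NL) (m - NL)) y) =1 utens k.
  by move=> y; rewrite (utens_zsum N_gt0 L_gt0 p1_lt) addrK -kp -kpS set2_id; ring.
apply: straightens_ext (straightens_lin _ _ _) split_k.
  apply: straightens_zsum; case: (ltP NL (m - l)) => [gap_gt | gap_le].
    by apply: (straightens_set2 (a := l + NL) (b := m)); apply: IH; rewrite ?set2_p ?set2_pS; lia.
  by apply: straightens_rel; apply: rel_at_diag; rewrite set2_p set2_pS; lia.
case: (ltgtP (l + NL) (m - NL)) => [lt_inner | gt_inner | eq_inner].
- apply: (straightens_widen (l' := l + NL) (m' := m - NL)); rewrite ?addrA ?subrK; try lia.
  apply: (straightens_set2 (a := l + NL) (b := m - NL)).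
  by apply: IH; rewrite ?set2_p ?set2_pS; lia.
- have -> : m - NL = l + m - (l + NL) by ring.
  by apply: straightens_span; apply: span_inner_term; lia.
- by apply: straightens_rel; apply: rel_at_diag; rewrite set2_p set2_pS.
Qed.

End Straightening.

Section Chains.
Variables (N L n : nat) (N_gt0 : (0 < N)%N) (L_gt0 : (0 < L)%N).
Local Notation Vt := (Vt N L n).
Local Notation utens := (@utens N L n N_gt0 L_gt0).

Lemma span_inner_in_relations p (l m : int) k (z : Vt) :
  (forall t, l < t <= m -> in_relations (utens (set2 p k t (l + m - t)))) ->
  span_inner p N_gt0 L_gt0 l m k z -> in_relations z.
Proof.
move=> inner [s [A /functional_extensionality ->]].
elim: s A => [_|t s IHs] /=.
  by apply: in_relations_ext (in_relations0 N L n) _ => y; rewrite big_nil.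
case/andP=> /inner t_rel /IHs s_rel.
apply: in_relations_ext (in_relations_lin t.1 s_rel t_rel) _ => y.
by rewrite big_cons addrC.
Qed.

Lemma straightens_in_relations p (p1_lt : (p.+1 < n)%N) (l m : int) k (x : Vt) :
  (forall t, l < t <= m -> in_relations (utens (set2 p k t (l + m - t)))) ->
  straightens p N_gt0 L_gt0 l m k x -> in_relations x.
Proof.
move=> inner [z [Z R]].
apply: in_relations_ext (in_relations_lin 1 (span_inner_in_relations inner Z)
                                           (rel_at_in_relations p1_lt R)) _ => y.
by ring.
Qed.

Lemma in_relations_run_head (len : nat) (m : int) (p : nat) (k : nat -> int) :
  (p + len.+1 < n)%N -> (forall i, (i <= len)%N -> k (p + i)%N = m - i%:Z) ->
  k (p + len.+1)%N = m -> in_relations (utens k).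
Proof.
elim/ltn_ind: len m p k => len IH m p k lt_n run head.
case: len IH lt_n run head => [|len] IH lt_n run head.
  have p1_lt : (p.+1 < n)%N by rewrite -addn1.
  apply/(rel_at_in_relations p1_lt)/rel_at_diag => //.
  by move: (run 0%N (leqnn 0)) head; rewrite addn0 addn1 => -> ->; rewrite subr0.
set p' := (p + len.+1)%N; set l := m - len.+1%:Z.
have p1_lt : (p'.+1 < n)%N by rewrite /p' -addnS.
(* straighten the last pair u_l (x) u_m; every term u_t (x) u_(l+m-t) then
   contains the shorter run u_t, ..., u_(l+1), u_t *)
have kp : k p' = l by rewrite /p' run.
have kpS : k p'.+1 = m by rewrite /p' -addnS.
have lt_lm : l < m by rewrite /l; lia.
apply: (straightens_in_relations p1_lt _ (straighten N_gt0 L_gt0 p1_lt kp kpS lt_lm)).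
move=> t /andP[lt_t t_le].
have [a Ea] : exists a : nat, m - t = a%:Z by exists `|m - t|%N; lia.
have [b Eb] : exists b : nat, t - l = b.+1%:Z by exists (`|t - l| - 1)%N; lia.
rewrite /l in Eb; apply: (IH b _ t (p + a)%N); try lia.
- move=> i le_i; rewrite /set2 ifN_eq ?ifN_eq; try (rewrite /p'; lia).
  by rewrite -addnA run; lia.
- by rewrite /set2 ifT //; rewrite /p'; apply/eqP; lia.
Qed.

Lemma in_relations_foot_run (len : nat) (l : int) (p : nat) (k : nat -> int) :
  (p + len.+1 < n)%N -> k p = l ->
  (forall i, (i <= len)%N -> k (p + i.+1)%N = l + len%:Z - i%:Z) -> in_relations (utens k).
Proof.
elim/ltn_ind: len l p k => len IH l p k lt_n foot run.
have p1_lt : (p.+1 < n)%N by move: lt_n; rewrite addnS; lia.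
case: len IH lt_n run => [|len] IH lt_n run.
  apply/(rel_at_in_relations p1_lt)/rel_at_diag => //.
  by move: (run 0%N (leqnn 0)); rewrite addn1 foot => ->; rewrite addr0 subr0.
set m : int := l + len.+1%:Z.
have kpS : k p.+1 = m by rewrite -addn1 run // subr0.
have lt_lm : l < m by rewrite /m; lia.
(* straighten the first pair u_l (x) u_m; the term u_t (x) u_(l+m-t) leaves
   the shorter run u_(l+m-t), u_(m-1), ..., u_(l+m-t) from position p+1 *)
apply: (straightens_in_relations p1_lt _ (straighten N_gt0 L_gt0 p1_lt foot kpS lt_lm)).
move=> t /andP[lt_t t_le].
have [c Ec] : exists c : nat, m - 1 - (l + m - t) = c%:Z.
  by exists (absz (m - 1 - (l + m - t))%R); lia.
rewrite /m in Ec; apply: (IH c _ (l + m - t) p.+1); try lia.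
- exact: set2_pS.
- move=> i le_i; rewrite /set2 ifN_eq ?ifN_eq; try lia.
  by rewrite addSnnS run /m; lia.
Qed.

End Chains.

Lemma utensor_utens N L (N_gt0 : (0 < N)%N) (L_gt0 : (0 < L)%N) (ks : seq int) :
  @utensor N L ks = utens (n := size ks) N_gt0 L_gt0 (fun r => nth 0 ks r).
Proof.
apply: functional_extensionality => y; rewrite /utensor /utens /ebasis.
congr (if _ then _ else _); apply/forallP/eqP => [Ey|->] /=.
  apply/ffunP => j; rewrite ffunE; have /and3P[] := Ey j.
  case: (y j) => [[u e] b] /= /eqP -> /eqP Ee /eqP Eb.
  rewrite /label_of; congr (_, _); [congr (_, _)|]; apply: val_inj => /=.
    by move: Ee; rewrite /kdot -/(kdot0 N L _) => /addIr <-.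
  by move: Eb; rewrite /kbar -/(kbar0 N _) => /addIr <-.
move=> j; rewrite ffunE /label_of /= eqxx /=.
by rewrite gez0_abs ?kdot0_ge0 // gez0_abs ?kbar0_ge0 // /kdot /kbar !eqxx.
Qed.

Theorem mainTheorem2 (N L : nat) (HN : (0 < N)%N) (HL : (0 < L)%N)
    (l m : int) (hlm : l <= m) :
  wedge_zero N L (rcons (downfrom m l) m) /\
  wedge_zero N L (l :: downfrom m l).
Proof.
have size_down : size (downfrom m l) = (`|m - l|).+1 by rewrite size_map size_iota.
have nth_down i : (i <= `|m - l|)%N -> nth 0 (downfrom m l) i = m - i%:Z.
  by move=> le_i; rewrite (nth_map 0%N) ?size_iota // nth_iota.
split; rewrite /wedge_zero utensor_utens.
- apply: (in_relations_run_head HN HL (len := `|m - l|) (m := m) (p := 0%N)).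
  + by rewrite size_rcons size_down.
  + by move=> i le_i; rewrite add0n nth_rcons size_down ltnS le_i nth_down.
  + by rewrite add0n nth_rcons size_down ltnn eqxx.
- apply: (in_relations_foot_run HN HL (len := `|m - l|) (l := l) (p := 0%N)) => //.
  + by rewrite add0n -[size _]/(size (downfrom m l)).+1 size_down.
  + move=> i le_i; rewrite add0n -[nth _ _ _]/(nth 0 (downfrom m l) i) nth_down //.
    by rewrite gez0_abs ?subr_ge0 //; ring.
Qed.
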